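(* Let $\mathcal{D}$ be the finite discrete probability distribution monad on $\mathbf{Sets}$, and let $\mathcal{K}\ell(\mathcal{D})_{+1}$ be the category whose objects are sets and whose morphisms $X\to Y$ are functions $f\colon X\to\mathcal{D}(Y+1)$, with composition given for $g\colon Y\to\mathcal{D}(Z+1)$ by $(g\odot f)(x)(z)=\sum_{y\in Y}f(x)(y)\,g(y)(z)$ for $z\in Z$ and $(g\odot f)(x)( * )=f(x)( * )+\sum_{y\in Y}f(x)(y)\,g(y)( * )$. Define $\square\colon\mathcal{K}\ell(\mathcal{D})_{+1}\to\mathbf{PoSets}^{\mathrm{op}}$ by $\square(X)=[0,1]^X$ with the pointwise order, and for $f\colon X\to\mathcal{D}(Y+1)$ and $q\in[0,1]^Y$, $\square(f)(q)(x)=\sum_{y\in Y}f(x)(y)\cdot q(y)+f(x)( * )$. Then the forgetful functor $U\colon\int\square\to\mathcal{K}\ell(\mathcal{D})_{+1}$ has a left adjoint $0$ with $0(X)=(X,\text{const }0)$ and a right adjoint $1$ with $1(X)=(X,\text{const }1)$; moreover there is a functor (comprehension) $\int\square\to\mathcal{K}\ell(\mathcal{D})_{+1}$ with $(X,p)\mapsto\{X\mid p\}=\{x\in X\mid p(x)=1\}$ which is right adjoint to $1$, and a functor (quotient) with $(X,p)\mapsto X/p=\{x\in X\mid p(x)\neq 1\}$ which is left adjoint to $0$.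
   Context: $\mathcal{D}(X)$ is the set of functions $\varphi\colon X\to[0,1]$ with finite support and $\sum_x\varphi(x)=1$; $Y+1=Y\sqcup\{*\}$. For a functor $F\colon\mathcal{B}\to\mathbf{PoSets}^{\mathrm{op}}$, $\int F$ is the category with objects $(X,P)$, $P\in F(X)$, and morphisms $f\colon(X,P)\to(Y,Q)$ the morphisms $f\colon X\to Y$ of $\mathcal{B}$ with $P\le F(f)(Q)$; the forgetful functor sends $(X,P)\mapsto X$, $f\mapsto f$; $0$ and $1$ act as identity on morphisms. *)

From HB Require Import structures.
From mathcomp Require Import all_boot all_order all_algebra.
From mathcomp Require Import all_classical all_reals.
Set Implicit Arguments.
Unset Strict Implicit.
Unset Printing Implicit Defensive.
Import Order.TTheory GRing.Theory Num.Theory.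
Local Open Scope classical_set_scope.
Local Open Scope ring_scope.

(* A category is given by objects, raw hom types, a predicate [ismor] singling
   out the genuine morphisms among raw ones, identities and composition. *)
Record cat := Cat {
  ob : Type;
  hom : ob -> ob -> Type;
  ismor : forall a b, hom a b -> Prop;
  idm : forall a, hom a a;
  comp : forall a b d, hom b d -> hom a b -> hom a d }.
Arguments ob : clear implicits.
Arguments hom : clear implicits.
Arguments ismor {c a b} _.
Arguments idm {c} _.
Arguments comp {c a b d} _ _.

Record functor (C D : cat) := Functor {
  fob : ob C -> ob D;
  fmor : forall a b, hom C a b -> hom D (fob a) (fob b) }.
Arguments fob {C D}.
Arguments fmor {C D} f {a b}.

Definition is_functor (C D : cat) (F : functor C D) : Prop :=
  (forall a b (f : hom C a b), ismor f -> ismor (fmor F f)) /\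
  (forall a, fmor F (idm a) = idm (fob F a)) /\
  (forall a b c (f : hom C a b) (g : hom C b c), ismor f -> ismor g ->
      fmor F (comp g f) = comp (fmor F g) (fmor F f)).

Definition adjunction (C D : cat) (F : functor C D) (G : functor D C) : Prop :=
  is_functor F /\ is_functor G /\
  exists eta : forall c, hom C c (fob G (fob F c)),
    (forall c, ismor (eta c)) /\
    (forall c c' (h : hom C c c'), ismor h ->
        comp (eta c') h = comp (fmor G (fmor F h)) (eta c)) /\
    (forall c d (f : hom C c (fob G d)), ismor f ->
        exists g : hom D (fob F c) d,
          (ismor g /\ comp (fmor G g) (eta c) = f) /\
          (forall g' : hom D (fob F c) d, ismor g' ->
              comp (fmor G g') (eta c) = f -> g' = g)).

Section Kleisli.
Variable R : realType.

Definition is_dist (X : choiceType) (phi : X -> R) : Prop :=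
  (forall x, 0 <= phi x <= 1) /\
  finite_set [set x | phi x != 0] /\
  \sum_(x \in [set: X]) phi x = 1.

(* Kl(D)_{+1}: objects are sets (choiceTypes), Y+1 = option Y with None = * ;
   raw morphisms X -> Y are functions X -> (option Y -> R) *)
Definition Khom (X Y : choiceType) := X -> option Y -> R.
Definition kmor (X Y : choiceType) (f : Khom X Y) : Prop :=
  forall x, is_dist (f x).
Definition kid (X : choiceType) : Khom X X :=
  fun x o => match o with Some y => if y == x then 1 else 0 | None => 0 end.
Definition kcomp (X Y Z : choiceType) (g : Khom Y Z) (f : Khom X Y) : Khom X Z :=
  fun x o => match o with
  | Some z => \sum_(y \in [set: Y]) f x (Some y) * g y (Some z)
  | None => f x None + \sum_(y \in [set: Y]) f x (Some y) * g y None
  end.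

Definition Kl : cat := @Cat choiceType Khom kmor kid kcomp.

Definition pred01 (X : choiceType) (p : X -> R) : Prop := forall x, 0 <= p x <= 1.
Definition box (X Y : choiceType) (f : Khom X Y) (q : Y -> R) : X -> R :=
  fun x => \sum_(y \in [set: Y]) f x (Some y) * q y + f x None.

Definition Iob := {X : choiceType & {p : X -> R | pred01 p}}.
Definition Icar (A : Iob) : choiceType := projT1 A.
Definition Ipred (A : Iob) : Icar A -> R := proj1_sig (projT2 A).
Arguments Ipred : clear implicits.
Definition Ihom (A B : Iob) := Khom (Icar A) (Icar B).
Definition imor (A B : Iob) (f : Ihom A B) : Prop :=
  kmor f /\ forall x, Ipred A x <= box f (Ipred B) x.
Definition Int : cat :=
  @Cat Iob Ihom imor (fun A => @kid (Icar A))
       (fun A B C (g : Ihom B C) (f : Ihom A B) => kcomp g f).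

Definition forget : functor Int Kl :=
  @Functor Int Kl Icar (fun A B (f : Ihom A B) => f).

Lemma pred01_cst0 (X : choiceType) : pred01 (fun _ : X => 0 : R).
Proof. by move=> _; rewrite lexx ler01. Qed.
Lemma pred01_cst1 (X : choiceType) : pred01 (fun _ : X => 1 : R).
Proof. by move=> _; rewrite lexx ler01. Qed.

Definition zeroI (X : choiceType) : Iob :=
  existT _ X (exist _ (fun _ => 0) (@pred01_cst0 X)).
Definition oneI (X : choiceType) : Iob :=
  existT _ X (exist _ (fun _ => 1) (@pred01_cst1 X)).

Definition zeroF : functor Kl Int :=
  @Functor Kl Int zeroI (fun X Y (f : Khom X Y) => f : Ihom (zeroI X) (zeroI Y)).
Definition oneF : functor Kl Int :=
  @Functor Kl Int oneI (fun X Y (f : Khom X Y) => f : Ihom (oneI X) (oneI Y)).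

Definition cmpr_ob (A : Iob) : choiceType :=
  {x : Icar A | Ipred A x == 1}%type.
Definition quot_ob (A : Iob) : choiceType :=
  {x : Icar A | Ipred A x != 1}%type.

End Kleisli.

(* Every Kleisli map [f] satisfies [0 <= box f q <= box f 1 = 1], so with identity
   units [0 -| U -| 1]. The key fact for comprehension is that a morphism
   [f : (X, p) -> (Y, q)] with [p x = 1] puts no mass on points [y] with [q y < 1]:
   [1 = p x <= box f q x <= box f 1 x = 1] leaves no room for it. Hence [f]
   restricts to [{X | p} -> {Y | q}], and a map [X -> {Y | q}] corresponds to its
   composite with the inclusion [{Y | q} -> Y]. For the quotient, a map
   [(X, p) -> 0(Y)] is a Kleisli map [f] with [f x * >= p x]; it factors uniquely
   through the unit sending [x] to [*] with weight [p x] and to its class in [X/p]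
   with weight [1 - p x], the factor being [(f x - p x * delta_* ) / (1 - p x)]. *)

From HB Require Import structures.
From mathcomp Require Import all_boot all_order all_algebra.
From mathcomp Require Import all_classical all_reals.

Set Implicit Arguments.
Unset Strict Implicit.
Unset Printing Implicit Defensive.
Import Order.TTheory GRing.Theory Num.Theory.
Local Open Scope classical_set_scope.
Local Open Scope ring_scope.

Section FinitelySupportedSums.
Variable R : numDomainType.

Definition fsupp (T : choiceType) (F : T -> R) := finite_set [set i | F i != 0].

Lemma fsumTE (T : choiceType) (s : seq T) (F : T -> R) :
  (forall i, F i != 0 -> i \in s) ->
  \sum_(i \in [set: T]) F i = \sum_(i <- undup s) F i.
Proof.
move=> Fs; rewrite -(fsbig_widen [set` undup s] [set: T] F) //.
  by rewrite -fsbig_seq ?undup_uniq.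
move=> i [_ /=]; rewrite mem_undup => /negP si; apply/eqP.
by apply: contraNT si => /Fs.
Qed.

Lemma fsuppP (T : choiceType) (F : T -> R) :
  fsupp F <-> exists s : seq T, forall i, F i != 0 -> i \in s.
Proof.
split=> [fF|[s Fs]]; last exact: sub_finite_set (finite_seq s).
exists (finmap.enum_fset (fset_set [set i | F i != 0])) => i Fi.
by rewrite in_fset_set // inE.
Qed.

Lemma fsupp_sub (T : choiceType) (F G : T -> R) :
  (forall i, F i != 0 -> G i != 0) -> fsupp G -> fsupp F.
Proof. by move=> FG /fsuppP[s Gs]; apply/fsuppP; exists s => i /FG /Gs. Qed.

Lemma fsuppMr (T : choiceType) (F G : T -> R) :
  fsupp F -> fsupp (fun i => F i * G i).
Proof. by apply: fsupp_sub => i; apply: contraNneq => ->; rewrite mul0r. Qed.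

Lemma fsuppMl (T : choiceType) (F G : T -> R) :
  fsupp F -> fsupp (fun i => G i * F i).
Proof. by apply: fsupp_sub => i; apply: contraNneq => ->; rewrite mulr0. Qed.

Lemma fsuppD (T : choiceType) (F G : T -> R) :
  fsupp F -> fsupp G -> fsupp (fun i => F i + G i).
Proof.
move=> /fsuppP[s Fs] /fsuppP[t Gt]; apply/fsuppP; exists (s ++ t) => i.
rewrite mem_cat; have [/Fs -> //|/negPn/eqP ->] := boolP (F i != 0).
by rewrite add0r => /Gt ->; rewrite orbT.
Qed.

Lemma fsupp_comp (I J : choiceType) (h : I -> J) (F : J -> R) :
  injective h -> fsupp F -> fsupp (F \o h).
Proof. by move=> hinj; apply: finite_preimage => x y _ _ /hinj. Qed.

Lemma fsumTD (T : choiceType) (F G : T -> R) : fsupp F -> fsupp G ->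
  \sum_(i \in [set: T]) (F i + G i) =
  \sum_(i \in [set: T]) F i + \sum_(i \in [set: T]) G i.
Proof.
move=> /fsuppP[s Fs] /fsuppP[t Gt].
have FGst i : F i + G i != 0 -> i \in s ++ t.
  rewrite mem_cat; have [/Fs -> //|/negPn/eqP ->] := boolP (F i != 0).
  by rewrite add0r => /Gt ->; rewrite orbT.
rewrite (fsumTE FGst) (@fsumTE _ (s ++ t) F) ?(@fsumTE _ (s ++ t) G) ?big_split //.
- by move=> i /Gt; rewrite mem_cat orbC => ->.
- by move=> i /Fs; rewrite mem_cat => ->.
Qed.

Lemma fsumTB (T : choiceType) (F G : T -> R) : fsupp F -> fsupp G ->
  \sum_(i \in [set: T]) (F i - G i) =
  \sum_(i \in [set: T]) F i - \sum_(i \in [set: T]) G i.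
Proof.
move=> fF fG; rewrite fsumTD //; last by apply: fsupp_sub fG => i; rewrite oppr_eq0.
congr (_ + _); rewrite -[RHS]mulN1r mulr_fsumr.
by apply: eq_fsbigr => i _; rewrite mulN1r.
Qed.

Lemma fsumT_single (T : choiceType) (j : T) (F : T -> R) :
  (forall i, i != j -> F i = 0) -> \sum_(i \in [set: T]) F i = F j.
Proof.
move=> Fj; rewrite (@fsumTE _ [:: j]) /= ?big_seq1 // => i.
by case: (eqVneq i j) => [->|/Fj ->]; rewrite ?mem_head ?eqxx.
Qed.

Lemma fsumT_ge_term (T : choiceType) (j : T) (F : T -> R) :
  (forall i, 0 <= F i) -> fsupp F -> F j <= \sum_(i \in [set: T]) F i.
Proof.
move=> F0 /fsuppP[s Fs]; rewrite (@fsumTE _ (j :: s)); last first.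
  by move=> i /Fs; rewrite inE => ->; rewrite orbT.
rewrite (bigD1_seq j) ?mem_undup ?mem_head ?undup_uniq //=.
by rewrite lerDl sumr_ge0.
Qed.

Lemma pfsumT_eq0 (T : choiceType) (j : T) (F : T -> R) :
  (forall i, 0 <= F i) -> fsupp F -> \sum_(i \in [set: T]) F i = 0 -> F j = 0.
Proof.
move=> F0 fF S0; apply/eqP; rewrite eq_le F0 andbT -S0.
exact: fsumT_ge_term.
Qed.

Lemma fsumT_option (T : choiceType) (F : option T -> R) : fsupp F ->
  \sum_(o \in [set: option T]) F o = F None + \sum_(y \in [set: T]) F (Some y).
Proof.
move=> /fsuppP[s Fs].
rewrite (@fsumTE _ (None :: map Some (pmap id s))); last first.
  case=> [y|] /Fs Fy; rewrite inE //=; rewrite mem_map // mem_pmap.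
  by apply/mapP; exists (Some y).
rewrite (@fsumTE _ (pmap id s) (F \o Some)); last first.
  by move=> y /Fs Fy; rewrite mem_pmap; apply/mapP; exists (Some y).
rewrite /= ifN; last by apply/mapP => -[].
by rewrite big_cons undup_map_inj // big_map.
Qed.

Lemma fsupp_rows (I J : choiceType) (s : seq I) (H : I -> J -> R) :
  (forall i, fsupp (H i)) ->
  exists t : seq J, forall i j, i \in s -> H i j != 0 -> j \in t.
Proof.
move=> fH.
exists (flatten [seq finmap.enum_fset (fset_set [set j | H i j != 0]) | i <- s]).
move=> i j si Hij; apply/flatten_mapP; exists i => //.
by rewrite in_fset_set ?inE //; apply: fH.
Qed.

Lemma fsupp_fsumT (I J : choiceType) (G : I -> R) (H : I -> J -> R) :
  fsupp G -> (forall i, fsupp (H i)) ->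
  fsupp (fun j => \sum_(i \in [set: I]) G i * H i j).
Proof.
move=> /fsuppP[s Gs] /(fsupp_rows s)[t Ht]; apply/fsuppP; exists t => j.
apply: contraNT => tj; apply/eqP/fsbig1 => i _.
have [/Gs si|/negPn/eqP ->] := boolP (G i != 0); last by rewrite mul0r.
by rewrite (contraNeq (Ht _ _ si) tj) mulr0.
Qed.

Lemma exchange_fsumT (I J : choiceType) (G : I -> R) (H : I -> J -> R) :
  fsupp G -> (forall i, fsupp (H i)) ->
  \sum_(i \in [set: I]) \sum_(j \in [set: J]) G i * H i j =
  \sum_(j \in [set: J]) \sum_(i \in [set: I]) G i * H i j.
Proof.
move=> /fsuppP[s Gs] /(fsupp_rows s)[t Ht].
have Fst i j : G i * H i j != 0 -> (i \in s) && (j \in t).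
  by rewrite mulf_eq0 negb_or => /andP[/Gs si /(Ht _ _ si) tj]; apply/andP.
have Ft i j : G i * H i j != 0 -> j \in t by move/Fst/andP=> [].
have Fs j i : G i * H i j != 0 -> i \in s by move/Fst/andP=> [].
under eq_fsbigr do rewrite (fsumTE (Ft _)).
under [RHS]eq_fsbigr do rewrite (fsumTE (Fs _)).
rewrite (@fsumTE _ s); last first.
  move=> i; apply: contraNT => si; rewrite big1_seq // => j _.
  by apply/eqP; apply: contraNT si => /Fs.
rewrite (@fsumTE _ t); last first.
  move=> j; apply: contraNT => tj; rewrite big1_seq // => i _.
  by apply/eqP; apply: contraNT tj => /Ft.
exact: exchange_big.
Qed.

Lemma fsumT_sub (T : choiceType) (P : pred T) (F : T -> R) :
  (forall y, ~~ P y -> F y = 0) ->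
  \sum_(u \in [set: {y | P y}]) F (val u) = \sum_(y \in [set: T]) F y.
Proof.
move=> FP; rewrite -(fsbig_widen [set y | P y] [set: T] F) //.
  by rewrite (reindex_fsbig val [set: {y | P y}] [set y | P y]).
by move=> y [_ /= /negP /FP].
Qed.

Lemma fsumT_val_eq (T : choiceType) (P : pred T) (x : T) (G : {y | P y} -> R) :
  \sum_(u \in [set: {y | P y}]) (val u == x)%:R * G u =
  if insub x is Some u then G u else 0.
Proof.
case: insubP => [u _ <-|nPx].
  rewrite (fsumT_single (j := u)) ?eqxx ?mul1r // => v vu.
  by rewrite (inj_eq val_inj) (negbTE vu) mul0r.
apply: fsbig1 => u _; case: eqP => [ux|]; last by rewrite mul0r.
by move: nPx; rewrite -ux (valP u).
Qed.

End FinitelySupportedSums.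

Section KleisliCategory.
Variable R : realType.

Lemma dist_ge0 (X : choiceType) (phi : X -> R) x : is_dist phi -> 0 <= phi x.
Proof. by case=> /(_ x) /andP[]. Qed.

Lemma dist_fsupp (X : choiceType) (phi : X -> R) : is_dist phi -> fsupp phi.
Proof. by case=> _ []. Qed.

Lemma dist_sum (X : choiceType) (phi : X -> R) :
  is_dist phi -> \sum_(x \in [set: X]) phi x = 1.
Proof. by case=> _ []. Qed.

Lemma is_distP (X : choiceType) (phi : X -> R) : (forall x, 0 <= phi x) ->
  fsupp phi -> \sum_(x \in [set: X]) phi x = 1 -> is_dist phi.
Proof.
move=> phi0 fphi sum1; split=> // x.
by rewrite phi0 /= -sum1; exact: fsumT_ge_term.
Qed.

Lemma is_dist_mix (T : choiceType) (t : R) (phi psi : T -> R) :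
  0 <= t <= 1 -> is_dist phi -> is_dist psi ->
  is_dist (fun i => t * phi i + (1 - t) * psi i).
Proof.
case/andP=> t0 t1 dphi dpsi; have t'0 : 0 <= 1 - t by rewrite subr_ge0.
have [fphi fpsi] := (dist_fsupp dphi, dist_fsupp dpsi).
apply: is_distP => [i||].
- by rewrite addr_ge0 ?mulr_ge0 ?(dist_ge0 _ dphi) ?(dist_ge0 _ dpsi).
- exact: fsuppD (fsuppMl _ fphi) (fsuppMl _ fpsi).
rewrite fsumTD; [|exact: fsuppMl fphi|exact: fsuppMl fpsi].
by rewrite -!mulr_fsumr (dist_sum dphi) (dist_sum dpsi) !mulr1 subrKC.
Qed.

Lemma kmor_ge0 (X Y : choiceType) (f : Khom R X Y) x o : kmor f -> 0 <= f x o.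
Proof. by move=> kf; apply: dist_ge0 (kf x). Qed.

Lemma kmor_fsupp_Some (X Y : choiceType) (f : Khom R X Y) x :
  kmor f -> fsupp (fun y => f x (Some y)).
Proof. by move=> kf; exact: fsupp_comp Some_inj (dist_fsupp (kf x)). Qed.

Lemma kmor_sum (X Y : choiceType) (f : Khom R X Y) x : kmor f ->
  f x None + \sum_(y \in [set: Y]) f x (Some y) = 1.
Proof.
by move=> kf; rewrite -(fsumT_option (F := f x)) ?dist_sum //; apply: dist_fsupp.
Qed.

Definition kret (X Y : choiceType) (h : X -> Y) : Khom R X Y :=
  fun x o => (o == Some (h x))%:R.

Lemma kmor_kret (X Y : choiceType) (h : X -> Y) : kmor (kret h).
Proof.
move=> x; apply: is_distP => [o||]; first by rewrite ler0n.
  by apply/fsuppP; exists [:: Some (h x)] => o; rewrite pnatr_eq0 eqb0 negbK inE.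
by rewrite (fsumT_single (j := Some (h x))) /kret ?eqxx // => o /negbTE ->.
Qed.

Lemma kidE (X : choiceType) : kid R (X := X) = kret id.
Proof.
apply/funext => x; apply/funext => -[y|] //=.
by rewrite /kret /= (inj_eq Some_inj); case: eqP.
Qed.

Lemma kmor_kid (X : choiceType) : kmor (@kid R X).
Proof. by rewrite kidE; apply: kmor_kret. Qed.

Lemma kcomp_kretr (X Y Z : choiceType) (g : Khom R Y Z) (h : X -> Y) x :
  kcomp g (kret h) x = g (h x).
Proof.
apply/funext => -[z|] /=;
  rewrite ?add0r (fsumT_single (j := h x)) /kret ?eqxx ?mul1r //;
  by move=> y /negbTE yhx; rewrite (inj_eq Some_inj) yhx mul0r.
Qed.

Lemma kcomp_kretl (X Y Z : choiceType) (f : Khom R X Y) (h : Y -> Z) x o :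
  injective h -> kcomp (kret h) f x (omap h o) = f x o.
Proof.
move=> hinj; case: o => [y|] /=; last by rewrite fsbig1 ?addr0 // => y _; rewrite mulr0.
rewrite (fsumT_single (j := y)) /kret ?eqxx ?mulr1 // => y' y'y.
by rewrite !(inj_eq Some_inj) (inj_eq hinj) eq_sym (negbTE y'y) mulr0.
Qed.

Definition kext (X Y : choiceType) (g : Khom R X Y) (o : option X) : option Y -> R :=
  if o is Some x then g x else fun o' => (o' == None)%:R.

Lemma kext_dist (X Y : choiceType) (g : Khom R X Y) o : kmor g -> is_dist (kext g o).
Proof.
case: o => [x|] kg /=; first exact: kg.
apply: is_distP => [o||]; first by rewrite ler0n.
  by apply/fsuppP; exists [:: None] => o; rewrite pnatr_eq0 eqb0 negbK inE.
by rewrite (fsumT_single (j := None)) ?eqxx // => o /negbTE ->.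
Qed.

Lemma kcompE (X Y Z : choiceType) (g : Khom R Y Z) (f : Khom R X Y) x o :
  fsupp (f x) ->
  kcomp g f x o = \sum_(o' \in [set: option Y]) f x o' * kext g o' o.
Proof.
move=> ffx; rewrite fsumT_option; last exact: fsuppMr.
by case: o => [z|] /=; rewrite ?mulr0 ?add0r ?mulr1.
Qed.

Lemma kmor_comp (X Y Z : choiceType) (g : Khom R Y Z) (f : Khom R X Y) :
  kmor f -> kmor g -> kmor (kcomp g f).
Proof.
move=> kf kg x; have ffx := dist_fsupp (kf x).
have fext o' : fsupp (kext g o') by apply/dist_fsupp/kext_dist.
apply: is_distP => [o||].
- rewrite kcompE //; apply: fsumr_ge0 => o' _.
  by apply: mulr_ge0; [exact: kmor_ge0 | exact/dist_ge0/kext_dist].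
- by apply: fsupp_sub (fsupp_fsumT ffx fext) => o; rewrite kcompE.
under eq_fsbigr do rewrite kcompE //.
rewrite -exchange_fsumT //.
under eq_fsbigr do rewrite -mulr_fsumr (dist_sum (kext_dist _ kg)) mulr1.
exact: dist_sum.
Qed.

Lemma kext_comp (X Y Z : choiceType) (h : Khom R Y Z) (g : Khom R X Y) o'' o :
  kmor g ->
  kext (kcomp h g) o'' o = \sum_(o' \in [set: option Y]) kext g o'' o' * kext h o' o.
Proof.
move=> kg; case: o'' => [y|] /=; first by rewrite kcompE //; apply: dist_fsupp.
by rewrite (fsumT_single (j := None)) /= ?mul1r // => o' /negbTE ->; rewrite mul0r.
Qed.

Lemma kcompA (X Y Z W : choiceType) (h : Khom R Z W) (g : Khom R Y Z)
    (f : Khom R X Y) : kmor f -> kmor g ->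
  kcomp h (kcomp g f) = kcomp (kcomp h g) f.
Proof.
move=> kf kg; apply/funext => x; apply/funext => o.
have ffx := dist_fsupp (kf x).
rewrite kcompE; last exact/dist_fsupp/kmor_comp.
rewrite [RHS]kcompE //.
under eq_fsbigr do rewrite kcompE // mulr_fsuml.
under [RHS]eq_fsbigr do rewrite kext_comp // mulr_fsumr.
under eq_fsbigr do under eq_fsbigr do rewrite -mulrA.
rewrite -exchange_fsumT // => o''.
by apply/fsuppMr/dist_fsupp/kext_dist.
Qed.

Lemma kcomp_kidl (X Y : choiceType) (f : Khom R X Y) : kcomp (@kid R _) f = f.
Proof.
apply/funext => x; apply/funext => o.
by rewrite kidE -[in LHS](omap_id o) kcomp_kretl.
Qed.

Lemma kcomp_kidr (X Y : choiceType) (f : Khom R X Y) : kcomp f (@kid R _) = f.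
Proof. by apply/funext => x; rewrite kidE kcomp_kretr. Qed.

End KleisliCategory.

Arguments kret {R X Y} h.

Section PredicateTransformer.
Variable R : realType.

(* [box f q x] is the weight that [kcomp (kpred q) f] gives to [*] at [x], so
   [box] inherits its functoriality from the associativity of [kcomp]. *)
Definition kpred (Y : choiceType) (q : Y -> R) : Khom R Y Y :=
  fun y o => if o is None then q y else 0.

Lemma box_kpred (X Y : choiceType) (f : Khom R X Y) q x :
  box f q x = kcomp (kpred q) f x None.
Proof. by rewrite /box /= addrC. Qed.

Lemma box_comp (X Y Z : choiceType) (f : Khom R X Y) (g : Khom R Y Z) r x :
  kmor f -> kmor g -> box (kcomp g f) r x = box f (box g r) x.
Proof.
move=> kf kg; rewrite box_kpred kcompA //= [RHS]/box addrC.
by congr (_ + _); apply: eq_fsbigr => y _; rewrite box_kpred.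
Qed.

Lemma boxB (X Y : choiceType) (f : Khom R X Y) (q q' : Y -> R) x : kmor f ->
  box f q x - box f q' x = \sum_(y \in [set: Y]) f x (Some y) * (q y - q' y).
Proof.
move=> kf; have fS := kmor_fsupp_Some x kf.
rewrite /box opprD addrACA subrr addr0 -fsumTB; [|exact: fsuppMr fS..].
by apply: eq_fsbigr => y _; rewrite mulrBr.
Qed.

Lemma box_kret (X Y : choiceType) (h : X -> Y) (q : Y -> R) :
  box (kret h) q = q \o h.
Proof. by apply/funext => x; rewrite box_kpred kcomp_kretr. Qed.

Lemma box_mono (X Y : choiceType) (f : Khom R X Y) (q q' : Y -> R) x :
  kmor f -> (forall y, q y <= q' y) -> box f q x <= box f q' x.
Proof.
move=> kf qq'; rewrite -subr_ge0 boxB //; apply: fsumr_ge0 => y _.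
by rewrite mulr_ge0 ?kmor_ge0 // subr_ge0.
Qed.

Lemma box_cst1 (X Y : choiceType) (f : Khom R X Y) x :
  kmor f -> box f (fun _ => 1) x = 1.
Proof.
move=> kf; rewrite /box addrC -[RHS](kmor_sum x kf).
by congr (_ + _); apply: eq_fsbigr => y _; rewrite mulr1.
Qed.

Lemma box_cst0 (X Y : choiceType) (f : Khom R X Y) x :
  box f (fun _ => 0) x = f x None.
Proof. by rewrite /box fsbig1 ?add0r // => y _; rewrite mulr0. Qed.

Lemma box_ge0 (X Y : choiceType) (f : Khom R X Y) q x :
  kmor f -> (forall y, 0 <= q y) -> 0 <= box f q x.
Proof.
move=> kf q0; apply: le_trans (kmor_ge0 x None kf) _.
by rewrite -box_cst0; apply: box_mono.
Qed.

Lemma box_ge1_eq0 (X Y : choiceType) (f : Khom R X Y) (q : Y -> R) x y :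
  kmor f -> (forall y, q y <= 1) -> 1 <= box f q x -> q y != 1 ->
  f x (Some y) = 0.
Proof.
move=> kf q1 boxq1 qy1.
have terms_ge0 y' : 0 <= f x (Some y') * (1 - q y').
  by rewrite mulr_ge0 ?kmor_ge0 // subr_ge0.
have /pfsumT_eq0 : \sum_(y' \in [set: Y]) f x (Some y') * (1 - q y') = 0.
  apply/eqP; rewrite eq_le fsumr_ge0 // andbT -boxB //.
  by rewrite box_cst1 // subr_le0.
move=> /(_ y terms_ge0 (fsuppMr _ (kmor_fsupp_Some x kf))) /eqP.
by rewrite mulf_eq0 subr_eq0 [1 == _]eq_sym (negbTE qy1) orbF => /eqP.
Qed.

End PredicateTransformer.

Section GrothendieckCategory.
Variable R : realType.

Lemma Ipred_ge0 (A : Iob R) x : 0 <= @Ipred R A x.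
Proof. by case/andP: (proj2_sig (projT2 A) x). Qed.

Lemma Ipred_le1 (A : Iob R) x : @Ipred R A x <= 1.
Proof. by case/andP: (proj2_sig (projT2 A) x). Qed.

Lemma imor_comp (A B C : Iob R) (f : Ihom A B) (g : Ihom B C) :
  imor f -> imor g -> imor (B := C) (kcomp g f).
Proof.
move=> [kf pf] [kg pg]; split; first exact: kmor_comp.
by move=> x; rewrite box_comp //; apply: le_trans (pf x) (box_mono _ _ _).
Qed.

Lemma imor_eq0 (A B : Iob R) (f : Ihom A B) x y :
  imor f -> @Ipred R A x = 1 -> @Ipred R B y != 1 -> f x (Some y) = 0.
Proof.
move=> [kf pf] px1; apply: box_ge1_eq0 => //; first exact: Ipred_le1.
by rewrite -px1 pf.
Qed.

End GrothendieckCategory.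

Section ZeroForgetOne.
Variable R : realType.

Lemma zeroF_functor : is_functor (zeroF R).
Proof. by split; [|split] => //= X Y f kf; split=> // x; apply: box_ge0. Qed.

Lemma oneF_functor : is_functor (oneF R).
Proof. by split; [|split] => //= X Y f kf; split=> // x; rewrite box_cst1. Qed.

Lemma forget_functor : is_functor (forget R).
Proof. by split; [|split] => //= A B f []. Qed.

Lemma zeroF_forget_adjunction : adjunction (zeroF R) (forget R).
Proof.
split; [exact: zeroF_functor | split; [exact: forget_functor |]].
exists (fun X => @kid R X); split; [exact: kmor_kid | split].
  by move=> X Y h _ /=; rewrite kcomp_kidl kcomp_kidr.
move=> X B f kf; exists f; rewrite /= kcomp_kidr; split=> [|g _ <-].
  by split=> //; split=> // x; apply: box_ge0 => // y; apply: Ipred_ge0.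
by rewrite kcomp_kidr.
Qed.

Lemma forget_oneF_adjunction : adjunction (forget R) (oneF R).
Proof.
split; [exact: forget_functor | split; [exact: oneF_functor |]].
exists (fun A => @kid R (Icar A)); split.
  move=> A; split=> [|x]; first exact: kmor_kid.
  by rewrite box_cst1 ?Ipred_le1 //; apply: kmor_kid.
split; first by move=> A B h _ /=; rewrite kcomp_kidl kcomp_kidr.
move=> A Y f [kf _]; exists f; rewrite /= kcomp_kidr; split=> [|g _ <-] //.
by rewrite kcomp_kidr.
Qed.

End ZeroForgetOne.

Section Comprehension.
Variable R : realType.

Definition cmpr_map (A B : Iob R) (f : Ihom A B) : Khom R (cmpr_ob A) (cmpr_ob B) :=
  fun u o => f (val u) (omap val o).

Definition cmprF : functor (Int R) (Kl R) :=
  @Functor (Int R) (Kl R) (@cmpr_ob R) cmpr_map.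

Definition cmpr_unit (X : choiceType) : Khom R X (cmpr_ob (oneI R X)) :=
  kret (fun x => exist _ x (eqxx 1)).

Lemma kmor_cmpr_map (A B : Iob R) (f : Ihom A B) : imor f -> kmor (cmpr_map f).
Proof.
move=> imf u; have [kf _] := imf; have pu1 : @Ipred R A (val u) = 1 := eqP (valP u).
have fsupp_u : fsupp (cmpr_map f u).
  exact: fsupp_comp (inj_omap val_inj) (dist_fsupp (kf (val u))).
apply: is_distP => // [o|]; first exact: kmor_ge0 (val u) (omap val o) kf.
rewrite fsumT_option // /cmpr_map /= -[RHS](kmor_sum (val u) kf); congr (_ + _).
by apply: (fsumT_sub (F := fun y => f (val u) (Some y))) => y; apply: imor_eq0.
Qed.

Lemma cmpr_map_id (A : Iob R) : cmpr_map (@kid R (Icar A)) = @kid R (cmpr_ob A).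
Proof. by apply/funext => u; apply/funext => -[v|]. Qed.

Lemma cmpr_map_comp (A B C : Iob R) (f : Ihom A B) (g : Ihom B C) :
  imor f -> cmpr_map (kcomp g f) = kcomp (cmpr_map g) (cmpr_map f).
Proof.
move=> imf; apply/funext => u; have pu1 : @Ipred R A (val u) = 1 := eqP (valP u).
have vanish o y : @Ipred R B y != 1 -> f (val u) (Some y) * g y o = 0.
  by move=> qy1; rewrite (imor_eq0 imf pu1 qy1) mul0r.
apply/funext => -[w|]; rewrite /cmpr_map /=; [|congr (_ + _)]; symmetry.
- by apply: (fsumT_sub (F := fun y => f (val u) (Some y) * g y (Some (val w)))) => y;
    apply: vanish.
- by apply: (fsumT_sub (F := fun y => f (val u) (Some y) * g y None)) => y;
    apply: vanish.
Qed.

Lemma cmprF_functor : is_functor cmprF.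
Proof.
split; [exact: kmor_cmpr_map | split; first exact: cmpr_map_id].
by move=> A B C f g imf _; apply: cmpr_map_comp.
Qed.

Lemma cmpr_map_unit (X : choiceType) (B : Iob R) (g : Ihom (oneI R X) B) x o :
  kcomp (cmpr_map g) (@cmpr_unit X) x o = g x (omap val o).
Proof. by rewrite kcomp_kretr. Qed.

Lemma kcomp_cmpr_unit (X Y : choiceType) (h : Khom R X Y) x o :
  kcomp (@cmpr_unit Y) h x o = h x (omap val o).
Proof.
have unit_inj : injective (fun y : Y => exist _ y (eqxx (1 : R)) : cmpr_ob (oneI R Y)).
  by move=> y y' /(congr1 val).
rewrite -(kcomp_kretl h x (omap val o) unit_inj).
by case: o => [u|] //=; congr (kcomp _ _ _ (Some _)); apply: val_inj.
Qed.

Definition cmpr_transpose (X : choiceType) (B : Iob R) (f : Khom R X (cmpr_ob B)) :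
  Ihom (oneI R X) B := kcomp (kret val) f.

Lemma imor_cmpr_transpose (X : choiceType) (B : Iob R) (f : Khom R X (cmpr_ob B)) :
  kmor f -> imor (cmpr_transpose f).
Proof.
move=> kf; split; first exact/kmor_comp/kmor_kret.
move=> x; rewrite /= box_comp //; last exact: kmor_kret.
rewrite box_kret (_ : _ \o _ = fun => 1) ?box_cst1 //.
by apply/funext => u; apply/eqP/(valP u).
Qed.

Lemma cmpr_map_transpose (X : choiceType) (B : Iob R) (f : Khom R X (cmpr_ob B)) :
  kcomp (cmpr_map (cmpr_transpose f)) (@cmpr_unit X) = f.
Proof.
apply/funext => x; apply/funext => o.
by rewrite cmpr_map_unit /cmpr_transpose kcomp_kretl //; apply: val_inj.
Qed.

Lemma cmpr_transpose_unique (X : choiceType) (B : Iob R) (g g' : Ihom (oneI R X) B) :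
  imor g -> imor g' ->
  kcomp (cmpr_map g) (@cmpr_unit X) = kcomp (cmpr_map g') (@cmpr_unit X) -> g = g'.
Proof.
move=> img img' gg'; apply/funext => x.
have gg'_val (o : option (cmpr_ob B)) : g x (omap val o) = g' x (omap val o).
  by have := congr1 (fun k => k x o) gg'; rewrite /= !cmpr_map_unit.
apply/funext => -[y|]; last exact: (gg'_val None).
have [qy1|qy1] := boolP (@Ipred R B y == 1); last by rewrite !(imor_eq0 _ _ qy1).
exact: (gg'_val (Some (exist _ y qy1))).
Qed.

Lemma oneF_cmprF_adjunction : adjunction (oneF R) cmprF.
Proof.
split; [exact: oneF_functor | split; [exact: cmprF_functor |]].
exists cmpr_unit; split; first by move=> X; apply: kmor_kret.
split=> [X Y h _|X B f kf].
  by apply/funext => x; apply/funext => o; rewrite /= kcomp_cmpr_unit cmpr_map_unit.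
have imf := imor_cmpr_transpose kf.
exists (cmpr_transpose f); split; first by split; last exact: cmpr_map_transpose.
move=> g img /= gf; apply: cmpr_transpose_unique => //.
by rewrite gf cmpr_map_transpose.
Qed.

End Comprehension.

Section Quotient.
Variable R : realType.

Definition quot_unit (A : Iob R) : Ihom A (zeroI R (quot_ob A)) :=
  fun x o => if o is Some u then (val u == x)%:R * (1 - @Ipred R A x) else @Ipred R A x.

Lemma kcomp_quot_unit (A : Iob R) (Y : choiceType) (k : Khom R (quot_ob A) Y) x o :
  kcomp k (@quot_unit A) x o =
  @Ipred R A x * kext k None o + (1 - @Ipred R A x) * kext k (insub x) o.
Proof.
have [u _ <-|nPx] := insubP; last first.
  move: nPx; rewrite negbK => /eqP px1.
  rewrite px1 subrr mul0r addr0 mul1r; case: o => [z|] /=.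
    by apply: fsbig1 => u _; rewrite px1 subrr !mulr0 mul0r.
  by rewrite fsbig1 ?addr0 // => u _; rewrite px1 subrr !mulr0 mul0r.
by case: o => [z|] /=; rewrite ?mulr0 ?add0r ?mulr1;
  under eq_fsbigr do rewrite -mulrA; rewrite fsumT_val_eq valK.
Qed.

Lemma quot_unitE (A : Iob R) x :
  @quot_unit A x = fun o =>
  @Ipred R A x * kext (@kid R _) None o +
  (1 - @Ipred R A x) * kext (@kid R _) (insub x) o.
Proof. by apply/funext => o; rewrite -kcomp_quot_unit kcomp_kidl. Qed.

Lemma imor_quot_unit (A : Iob R) : imor (@quot_unit A).
Proof.
split=> x; last by rewrite box_cst0.
by rewrite quot_unitE; apply: is_dist_mix; rewrite ?Ipred_ge0 ?Ipred_le1 //;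
  apply/kext_dist/kmor_kid.
Qed.

Lemma quot_pred_lt1 (A : Iob R) (u : quot_ob A) : 0 < 1 - @Ipred R A (val u).
Proof. by rewrite subr_gt0 lt_neqAle Ipred_le1 andbT; exact: (valP u). Qed.

(* Solves [f x o = p x * [o = *] + (1 - p x) * k [x] o] for [k]. *)
Definition quot_lift (A : Iob R) (Y : choiceType) (f : Ihom A (zeroI R Y)) :
    Khom R (quot_ob A) Y :=
  fun u o => (f (val u) o - @Ipred R A (val u) * (o == None)%:R) /
             (1 - @Ipred R A (val u)).

Lemma kcomp_quot_lift (A : Iob R) (Y : choiceType) (f : Ihom A (zeroI R Y)) :
  imor f -> kcomp (quot_lift f) (@quot_unit A) = f.
Proof.
move=> imf; have [kf _] := imf; apply/funext => x; apply/funext => o.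
rewrite kcomp_quot_unit; case: insubP => [u _ <-|]; last first.
  rewrite negbK => /eqP px1; rewrite px1 subrr mul0r addr0 mul1r.
  have fS z : f x (Some z) = 0.
    by apply: (imor_eq0 imf px1); rewrite /= eq_sym oner_neq0.
  case: o => [z|] /=; first by rewrite fS.
  by rewrite -(kmor_sum x kf) fsbig1 ?addr0.
rewrite /= /quot_lift mulrCA mulfV ?mulr1 ?subrKC //.
by rewrite gt_eqF ?quot_pred_lt1.
Qed.

Lemma quot_lift_unique (A : Iob R) (Y : choiceType) (k : Khom R (quot_ob A) Y)
    (f : Ihom A (zeroI R Y)) :
  kcomp k (@quot_unit A) = f -> k = quot_lift f.
Proof.
move=> kf; apply/funext => u; apply/funext => o.
rewrite /quot_lift -kf kcomp_quot_unit valK /= addrAC subrr add0r mulrC mulKf //.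
by rewrite gt_eqF ?quot_pred_lt1.
Qed.

Lemma kmor_quot_lift (A : Iob R) (Y : choiceType) (f : Ihom A (zeroI R Y)) :
  imor f -> kmor (quot_lift f).
Proof.
move=> [kf pf] u; set x := val u; have px_lt1 := quot_pred_lt1 u.
have fsupp_pt : fsupp (fun o : option Y => @Ipred R A x * (o == None)%:R).
  apply/fsuppP; exists [:: None] => o.
  by rewrite mulf_eq0 pnatr_eq0 eqb0 negb_or negbK inE => /andP[].
apply: is_distP => [o||].
- rewrite divr_ge0 ?(ltW px_lt1) // subr_ge0; case: o => [z|] /=.
    by rewrite mulr0 kmor_ge0.
  by rewrite mulr1 -box_cst0 (pf x).
- apply/fsuppMr/(fsuppD (dist_fsupp (kf x))).
  by apply: fsupp_sub fsupp_pt => o; rewrite oppr_eq0.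
rewrite /quot_lift -mulr_fsuml fsumTB //; last exact: dist_fsupp.
rewrite (dist_sum (kf x)) (fsumT_single (j := None)) /= ?mulr1 ?mulfV ?gt_eqF //.
by case=> // z _; rewrite mulr0.
Qed.

Definition quot_map (A B : Iob R) (h : Ihom A B) : Khom R (quot_ob A) (quot_ob B) :=
  quot_lift (Y := quot_ob B) (kcomp (@quot_unit B) h).

Definition quotF : functor (Int R) (Kl R) :=
  @Functor (Int R) (Kl R) (@quot_ob R) quot_map.

Lemma imor_quot_unit_comp (A B : Iob R) (h : Ihom A B) :
  imor h -> imor (B := zeroI R (quot_ob B)) (kcomp (@quot_unit B) h).
Proof. by move=> imh; apply: imor_comp imh (imor_quot_unit B). Qed.

Lemma quot_map_unit (A B : Iob R) (h : Ihom A B) :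
  imor h -> kcomp (quot_map h) (@quot_unit A) = kcomp (@quot_unit B) h.
Proof. by move=> imh; apply/kcomp_quot_lift/imor_quot_unit_comp. Qed.

Lemma quotF_functor : is_functor quotF.
Proof.
have kunit A : kmor (@quot_unit A) by case: (imor_quot_unit A).
split=> /= [A B h imh|]; first exact/kmor_quot_lift/imor_quot_unit_comp.
split=> [A|A B C f g imf img]; apply/esym/quot_lift_unique.
  by rewrite kcomp_kidl kcomp_kidr.
have [[kf _] [kg _]] := (imf, img).
have kqf : kmor (quot_map f) by apply/kmor_quot_lift/imor_quot_unit_comp.
by rewrite -kcompA // (quot_map_unit imf) [LHS]kcompA // (quot_map_unit img) kcompA.
Qed.

Lemma quotF_zeroF_adjunction : adjunction quotF (zeroF R).
Proof.
split; [exact: quotF_functor | split; [exact: zeroF_functor |]].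
exists quot_unit; split; first exact: imor_quot_unit.
split=> [A B h imh|A Y f imf]; first by rewrite /= quot_map_unit.
exists (quot_lift f); split.
  by split; [exact: kmor_quot_lift | exact: kcomp_quot_lift].
by move=> g _ /quot_lift_unique.
Qed.

End Quotient.

Theorem proposition4p1 (R : realType) :
  adjunction (zeroF R) (forget R) /\
  adjunction (forget R) (oneF R) /\
  (exists cm : forall A B : Iob R, Ihom A B -> Khom R (cmpr_ob A) (cmpr_ob B),
      adjunction (oneF R) (@Functor (Int R) (Kl R) (@cmpr_ob R) cm)) /\
  (exists qm : forall A B : Iob R, Ihom A B -> Khom R (quot_ob A) (quot_ob B),
      adjunction (@Functor (Int R) (Kl R) (@quot_ob R) qm) (zeroF R)).
Proof.
split; first exact: zeroF_forget_adjunction.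
split; first exact: forget_oneF_adjunction.
split; first by exists (@cmpr_map R); exact: oneF_cmprF_adjunction.
by exists (@quot_map R); exact: quotF_zeroF_adjunction.
Qed.
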